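(* Let $X$ be a real Banach space with $\dim X\ge 2$ and let $\alpha,\beta>0$. Then $$\alpha+\beta\le DW_B(X,\alpha,\beta)\le\max\{2\alpha+\beta,\ \alpha+2\beta\}.$$
   Context: For $x,y\in X$, $x$ is Birkhoff orthogonal to $y$, written $x\perp_B y$, if $\|x+\lambda y\|\ge\|x\|$ for all $\lambda\in\mathbb R$. For $\alpha,\beta>0$, $$DW_B(X,\alpha,\beta)=\sup\left\{\frac{\alpha\|x\|+\beta\|y\|}{\|x-y\|}\left\|\frac{x}{\|x\|}-\frac{y}{\|y\|}\right\|: x,y\in X\setminus\{0\},\ x\perp_B y\right\}.$$ *)

From HB Require Import structures.
From mathcomp Require Import all_boot all_order all_algebra.
From mathcomp Require Import all_classical all_reals all_analysis.
Set Implicit Arguments. Unset Strict Implicit. Unset Printing Implicit Defensive.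
Import Order.TTheory GRing.Theory Num.Theory.
Import numFieldNormedType.Exports.
Local Open Scope classical_set_scope.
Local Open Scope ring_scope.

Definition birkhoff_orth (R : realType) (X : normedModType R) (x y : X) : Prop :=
  forall l : R, `|x| <= `|x + l *: y|.

Definition DW_B_set (R : realType) (X : normedModType R) (a b : R) : set R :=
  [set t | exists x y : X, [/\ x != 0, y != 0, birkhoff_orth x y &
      t = (a * `|x| + b * `|y|) / `|x - y| * `| (`|x|^-1 *: x) - (`|y|^-1 *: y) |] ].

(* DW_B(X, α, β) as a supremum in the extended reals (it may a priori be +oo). *)
Definition DW_B (R : realType) (X : normedModType R) (a b : R) : \bar R :=
  ereal_sup [set t%:E | t in DW_B_set X a b].

Definition dim_ge2 (R : realType) (X : normedModType R) : Prop :=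
  exists x y : X, forall a b : R, a *: x + b *: y = 0 -> a = 0 /\ b = 0.

From HB Require Import structures.
From mathcomp Require Import all_boot all_order all_algebra.
From mathcomp Require Import all_classical all_reals all_analysis.
From mathcomp Require Import lra.
Set Implicit Arguments. Unset Strict Implicit.
Import Order.TTheory GRing.Theory Num.Theory.
Import numFieldNormedType.Exports.
Local Open Scope ring_scope.

(* Lower bound: in dimension at least 2 a Birkhoff orthogonal pair exists
   (take a point of a line [u + t v] nearest to the origin), and it may be
   normalised; for orthogonal unit vectors the quotient defining DW_B is
   exactly [a + b].
   Upper bound: orthogonality gives [|x| <= |x - y|] and hence
   [|y| - |x| <= |x - y|], while a Dunkl-Williams type estimate bounds the
   distance of the normalised vectors by
   [(|x - y| + | |x| - |y| |) / max(|x|, |y|)]; the rest is real arithmetic. *)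

Lemma weighted_DW_bound (R : realFieldType) (ws wt s t d e : R) :
  0 <= ws -> 0 <= wt -> 0 < s -> s <= t -> s <= d -> t - s <= d -> 0 <= e ->
  e * t <= d + (t - s) -> (ws * s + wt * t) * e <= (ws + 2 * wt) * d.
Proof.
move=> ws0 wt0 s0 st sd tsd e0 et.
have es : e * s <= d by nra.
have et2 : e * t <= 2 * d by lra.
nra.
Qed.

Section BirkhoffOrthogonality.
Variables (R : realType) (X : normedModType R).
Implicit Types (x y u v : X).

Lemma birkhoff_orthZ x y s t :
  s != 0 -> birkhoff_orth x y -> birkhoff_orth (s *: x) (t *: y).
Proof.
move=> s0 oxy l.
have -> : s *: x + l *: (t *: y) = s *: (x + (l * t / s) *: y).
  by rewrite scalerDr !scalerA mulrCA divff // mulr1.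
by rewrite !normrZ ler_wpM2l.
Qed.

Lemma birkhoff_orth_le_normB x y : birkhoff_orth x y -> `|x| <= `|x - y|.
Proof. by move=> /(_ (-1)); rewrite scaleN1r. Qed.

Lemma continuous_norm_line u v : continuous (fun t : R => `|u + t *: v|).
Proof.
move=> t; apply: (continuous_comp (f := fun t : R => u + t *: v)).
  by apply: continuousD; [exact: cst_continuous | apply: continuousZl; exact: cvg_id].
exact: norm_continuous.
Qed.

Lemma exists_norm_line_min u v :
  v != 0 -> exists c, forall t, `|u + c *: v| <= `|u + t *: v|.
Proof.
move=> v0; have nv : 0 < `|v| by rewrite normr_gt0.
pose M := 2 * `|u| / `|v|.
have M0 : 0 <= M by rewrite divr_ge0 // mulr_ge0.
have MM : - M <= M by lra.
have [c _ cmin] := EVT_min MM (continuous_subspaceT (@continuous_norm_line u v)).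
exists c => t; have [tM|tM] := boolP (t \in `[- M, M]); first exact: cmin.
have c_le_u : `|u + c *: v| <= `|u|.
  by have := cmin 0; rewrite scale0r addr0; apply; rewrite in_itv /= oppr_le0 M0.
apply: (le_trans c_le_u).
have Mt : M <= `|t|.
  move: tM; rewrite in_itv /= negb_and -!ltNge.
  by case/orP=> tM; [rewrite ltr0_norm | rewrite gtr0_norm]; lra.
have : M * `|v| <= `|t| * `|v| by rewrite ler_pM2r.
rewrite /M divfK ?lt0r_neq0 // => Mvt.
have := lerB_normD (t *: v) u; rewrite normrZ (addrC (t *: v)); lra.
Qed.

Lemma birkhoff_orth_norm_line_min u v c :
  (forall t, `|u + c *: v| <= `|u + t *: v|) -> birkhoff_orth (u + c *: v) v.
Proof. by move=> cmin l; rewrite -addrA -scalerDl. Qed.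

Lemma dim_ge2_birkhoff_orth :
  dim_ge2 X -> exists x y, [/\ `|x| = 1, `|y| = 1 & birkhoff_orth x y].
Proof.
move=> [u [v ind]].
have v0 : v != 0.
  apply/eqP=> v0; move: (ind 0 1); rewrite v0 scaler0 scale0r addr0.
  by move=> /(_ erefl) [_ /eqP]; rewrite oner_eq0.
have [c cmin] := @exists_norm_line_min u v v0.
have w0 : u + c *: v != 0.
  apply/eqP=> w0; move: (ind 1 c); rewrite scale1r w0.
  by move=> /(_ erefl) [/eqP]; rewrite oner_eq0.
exists (`|u + c *: v|^-1 *: (u + c *: v)), (`|v|^-1 *: v).
split; [exact: normfZV | exact: normfZV |].
apply: birkhoff_orthZ; last exact: birkhoff_orth_norm_line_min.
by rewrite invr_eq0 normr_eq0.
Qed.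

Lemma normB_normalize_le x y : x != 0 -> y != 0 ->
  `| `|x|^-1 *: x - `|y|^-1 *: y| * `|x| <= `|x - y| + `| `|x| - `|y| |.
Proof.
move=> x0 y0.
have nx : `|x| != 0 by rewrite normr_eq0.
have ny : `|y| != 0 by rewrite normr_eq0.
have -> : `| `|x|^-1 *: x - `|y|^-1 *: y| * `|x|
    = `| `|x| *: (`|x|^-1 *: x - `|y|^-1 *: y)| by rewrite normrZ normr_id mulrC.
rewrite scalerBr !scalerA mulfV // scale1r.
have -> : x - (`|x| * `|y|^-1) *: y = (x - y) + (1 - `|x| / `|y|) *: y.
  by rewrite scalerBl scale1r addrA subrK.
apply: (le_trans (ler_normD _ _)); rewrite lerD2l normrZ.
by rewrite -[X in _ * X]normr_id -normrM mulrBl mul1r divfK // distrC.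
Qed.

End BirkhoffOrthogonality.

Definition DW_quotient (R : realType) (X : normedModType R) (a b : R) (x y : X) :=
  (a * `|x| + b * `|y|) / `|x - y| * `| (`|x|^-1 *: x) - (`|y|^-1 *: y) |.

Lemma DW_quotient_unit (R : realType) (X : normedModType R) (a b : R) (x y : X) :
  `|x| = 1 -> `|y| = 1 -> birkhoff_orth x y -> DW_quotient a b x y = a + b.
Proof.
move=> nx ny oxy; have := birkhoff_orth_le_normB oxy; rewrite nx => dxy.
by rewrite /DW_quotient nx ny invr1 !scale1r !mulr1 divfK // gt_eqF // (lt_le_trans ltr01).
Qed.

Lemma DW_quotient_le_max (R : realType) (X : normedModType R) (a b : R) (x y : X) :
  0 < a -> 0 < b -> x != 0 -> y != 0 -> birkhoff_orth x y ->
  DW_quotient a b x y <= Num.max (2 * a + b) (a + 2 * b).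
Proof.
move=> a0 b0 x0 y0 oxy.
have nx : 0 < `|x| by rewrite normr_gt0.
have ny : 0 < `|y| by rewrite normr_gt0.
have x_le_d := birkhoff_orth_le_normB oxy.
have yx_le_d : `|y| - `|x| <= `|x - y|.
  by rewrite distrC -[`|x|]normrN lerB_normD.
have d0 : 0 < `|x - y| by exact: lt_le_trans x_le_d.
rewrite /DW_quotient mulrAC ler_pdivrMr //.
have [yx|xy] := leP `|y| `|x|.
- have := normB_normalize_le x0 y0; rewrite ger0_norm ?subr_ge0 // => ex.
  have xy_le_d : `|x| - `|y| <= `|x - y| by lra.
  have := weighted_DW_bound (ltW b0) (ltW a0) ny yx (le_trans yx x_le_d)
    xy_le_d (normr_ge0 _) ex.
  by rewrite addrC (addrC b) => /le_trans; apply; rewrite ler_pM2r // le_max lexx.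
- have := normB_normalize_le y0 x0.
  rewrite ger0_norm ?subr_ge0 ?(ltW xy) // distrC (distrC y) => ey.
  have := weighted_DW_bound (ltW a0) (ltW b0) nx (ltW xy) x_le_d yx_le_d
    (normr_ge0 _) ey.
  by move=> /le_trans; apply; rewrite ler_pM2r // le_max lexx orbT.
Qed.

Theorem proposition3 (R : realType) (X : completeNormedModType R) (a b : R) :
  dim_ge2 X -> 0 < a -> 0 < b ->
  ((a + b)%:E <= DW_B X a b)%E /\
  (DW_B X a b <= (Num.max (2 * a + b) (a + 2 * b))%:E)%E.
Proof.
move=> d2 a0 b0; split.
- have [x [y [nx ny oxy]]] := dim_ge2_birkhoff_orth d2.
  apply: ereal_sup_ubound; exists (a + b) => //; exists x, y.
  split=> //; [by rewrite -normr_gt0 nx | by rewrite -normr_gt0 ny |].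
  by rewrite -(DW_quotient_unit a b nx ny oxy).
- apply: ge_ereal_sup => _ [t [x [y [x0 y0 oxy ->]]] <-].
  by rewrite lee_fin; exact: DW_quotient_le_max.
Qed.
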